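(* In the setting of the context, assume $H=\mathsf{Exp}(\alpha)$ with density $h(x)=\alpha\mathrm e^{-\alpha x}$, $G=\mathsf{Exp}(\beta)$ with density $g(y)=\beta\mathrm e^{-\beta y}$ ($\alpha,\beta>0$), and $J=\mathsf{Gamma}(\gamma,\eta)$ with density $j(\xi)=\frac{\gamma^\eta\xi^{\eta-1}\mathrm e^{-\gamma\xi}}{(\eta-1)!}$ ($\gamma>0$, $\eta\ge1$), with $\nu\in(-\gamma,0)$. Then under $\mathbb P^*$, in the variables $\tilde\lambda=c(t)\lambda$ with $c(t)=\theta(1+\nu/\gamma)^{-\eta}\frac{\beta}{\beta-B(t)}$, the process is a dynamic contagion process with transformed parameters $$a\to\theta\Big(1+\frac{\nu}{\gamma}\Big)^{-\eta}\frac{\beta}{\beta-B(t)}\,a,\qquad \rho\to\psi\frac{\alpha}{\alpha-B(t)}\rho,$$ $$J:\ \mathsf{Gamma}(\gamma,\eta)\to\mathsf{Gamma}(\gamma+\nu,\eta),\qquad H:\ \mathsf{Exp}(\alpha)\to\mathsf{Exp}(\lambda_h),\qquad G:\ \mathsf{Exp}(\beta)\to\mathsf{Exp}(\lambda_g),$$ where $\lambda_h:=\frac{\alpha-B(t)}{\theta(1+\nu/\gamma)^{-\eta}\frac{\beta}{\beta-B(t)}}$ and $\lambda_g:=\frac{\beta-B(t)}{\theta(1+\nu/\gamma)^{-\eta}\frac{\beta}{\beta-B(t)}}$ (Gamma parametrized by rate then shape; Exp by rate).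
   Context: Setting: complete filtered probability space $(\Omega,\mathcal F,\mathbb F,\mathbb P)$, horizon $[0,T]$. $M_t$ is a Poisson process with constant rate $\rho>0$, jump times $T_{1,i}$, i.i.d. positive marks $X_i\sim H$. $N_t=\sum_j\mathbb I_{\{T_{2,j}\le t\}}$ has intensity $\lambda_t=a+(\lambda_0-a)\mathrm e^{-\delta t}+\sum_iX_i\mathrm e^{-\delta(t-T_{1,i})}\mathbb I_{\{T_{1,i}\le t\}}+\sum_jY_j\mathrm e^{-\delta(t-T_{2,j})}\mathbb I_{\{T_{2,j}\le t\}}$ (constants $\lambda_0>0,a\ge0,\delta>0$; i.i.d. $Y_j\sim G$); $C_t=\sum_j\Xi_j\mathbb I_{\{T_{2,j}\le t\}}$, i.i.d. $\Xi_j\sim J$; all independent; $\Lambda_t=\int_0^t\lambda_u\mathrm du$. Laplace transforms $\hat g(s)=\int\mathrm e^{-sy}\mathrm dG$ etc. Parameters $\theta,\psi\ge1$, $\nu<0$, $\phi=-(\theta\hat j(\nu)-1)$, $\delta>\theta\hat j(\nu)\mu_G$ with $\mu_G$ the mean of $G$. $B$ solves $B'-\delta B+\theta\hat j(\nu)\hat g(-B)+\phi-1=0$, $B(0)=b>0$ (with $B(t)<\alpha$, $B(t)<\beta$ so the transforms are finite); $K$ solves $K'+a\delta B+\rho[\psi\hat h(-B)-1]=0$, $K(0)=0$. $\mathbb P^*$: $\mathrm d\mathbb P^*/\mathrm d\mathbb P|_{\mathcal F_T}=\zeta_T$ with $\zeta_t=\mathrm e^{K(t)}\theta^{N_t}\mathrm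 e^{B(t)\lambda_t}\mathrm e^{-\nu C_t}\mathrm e^{\phi\Lambda_t}\psi^{M_t}$ normalized by its value at $0$. General fact used to interpret ''transformed parameters'': with $c(t)=\theta\hat j(\nu)\hat g(-B(t))$, $\tilde\lambda=c(t)\lambda$, $\tilde\Lambda=c(t)\Lambda$, the $\mathbb P^*$-generator is $\partial_t\tilde f+\tilde\lambda\partial_{\tilde\Lambda}\tilde f+\delta(c(t)a-\tilde\lambda)\partial_{\tilde\lambda}\tilde f+\tilde\lambda[\iint\tilde f(\tilde\lambda+u,n+1,c+\xi,m,\tilde\Lambda,t)\frac{\tilde g(u/c(t);t)}{c(t)}\mathrm du\,\tilde j(\xi)\mathrm d\xi-\tilde f]+\psi\hat h(-B(t))\rho[\int\tilde f(\tilde\lambda+v,n,c,m+1,\tilde\Lambda,t)\frac{\tilde h(v/c(t);t)}{c(t)}\mathrm dv-\tilde f]$, where $\tilde g(y;t)=\frac{\mathrm e^{B(t)y}}{\hat g(-B(t))}g(y)$, $\tilde h(x;t)=\frac{\mathrm e^{B(t)x}}{\hat h(-B(t))}h(x)$, $\tilde j(\xi)=\frac{\mathrm e^{-\nu\xi}}{\hat j(\nu)}j(\xi)$. *)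

From HB Require Import structures.
From mathcomp Require Import all_boot all_order all_algebra.
From mathcomp Require Import all_classical all_reals all_analysis.
Set Implicit Arguments. Unset Strict Implicit. Unset Printing Implicit Defensive.
Import Order.TTheory GRing.Theory Num.Theory.
Import numFieldNormedType.Exports.
Local Open Scope classical_set_scope.
Local Open Scope ring_scope.

Section DCP.
Variable R : realType.

(* Lebesgue integral over the positive half-line (marks are positive). *)
Definition Lint (f : R -> R) : R :=
  Rintegral (@lebesgue_measure R) `]0%R, +oo[%classic f.

Definition exp_pdf (r : R) (x : R) : R := r * expR (- (r * x)).

Definition gamma_pdf (r : R) (k : nat) (x : R) : R :=
  r ^+ k * x ^+ k.-1 * expR (- (r * x)) / (k.-1)`!%:R.

Definition laplace (dens : R -> R) (s : R) : R :=
  Lint (fun y => expR (- (s * y)) * dens y).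

Definition mean (dens : R -> R) : R := Lint (fun y => y * dens y).

(* state functions f(lambda, n, c, m, Lambda, t) *)
Definition stfun := R -> nat -> R -> nat -> R -> R -> R.

(* Generator of a dynamic contagion process (N, C, M, lambda, Lambda) with
   (possibly time-dependent) base level a, decay delta, external jump rate rho,
   self-excited jump density g, external jump density h, claim density j. *)
Definition DCP_gen (a rho delta : R) (g h j : R -> R) (f : stfun)
    (lam : R) (n : nat) (c : R) (m : nat) (Lam t : R) : R :=
  derive1 (fun s => f lam n c m Lam s) t
  + lam * derive1 (fun L => f lam n c m L t) Lam
  + delta * (a - lam) * derive1 (fun l => f l n c m Lam t) lam
  + lam * (Lint (fun xi => Lint (fun u => f (lam + u) n.+1 (c + xi) m Lam t * g u) * j xi)
           - f lam n c m Lam t)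
  + rho * (Lint (fun v => f (lam + v) n c m.+1 Lam t * h v) - f lam n c m Lam t).

Definition tilde_g (B : R -> R) (g : R -> R) (t y : R) : R :=
  expR (B t * y) / laplace g (- B t) * g y.
Definition tilde_h (B : R -> R) (h : R -> R) (t x : R) : R :=
  expR (B t * x) / laplace h (- B t) * h x.
Definition tilde_j (nu : R) (j : R -> R) (xi : R) : R :=
  expR (- (nu * xi)) / laplace j nu * j xi.

Definition cfun (theta nu : R) (B : R -> R) (g j : R -> R) (t : R) : R :=
  theta * laplace j nu * laplace g (- B t).

(* The P*-generator, written exactly as in the "general fact" of the context,
   acting on functions of (lambda~, n, c, m, Lambda~, t). *)
Definition Pstar_gen (theta psi nu rho a delta : R) (B : R -> R) (g h j : R -> R)
    (f : stfun) (lam : R) (n : nat) (c : R) (m : nat) (Lam t : R) : R :=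
  let ct := cfun theta nu B g j t in
  derive1 (fun s => f lam n c m Lam s) t
  + lam * derive1 (fun L => f lam n c m L t) Lam
  + delta * (ct * a - lam) * derive1 (fun l => f l n c m Lam t) lam
  + lam * (Lint (fun xi => Lint (fun u => f (lam + u) n.+1 (c + xi) m Lam t
                                            * (tilde_g B g t (u / ct) / ct))
                            * tilde_j nu j xi)
           - f lam n c m Lam t)
  + psi * laplace h (- B t) * rho
      * (Lint (fun v => f (lam + v) n c m.+1 Lam t * (tilde_h B h t (v / ct) / ct))
         - f lam n c m Lam t).

End DCP.

(* With exponential and Gamma marks every transform in the P*-generator is explicit:
   hat g(-B) = beta/(beta-B), hat h(-B) = alpha/(alpha-B) and hat j(nu) = (1+nu/gamma)^-eta,
   all obtained from int_0^oo x^k e^(-rx) dx = k!/r^(k+1), which follows by the fundamental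
   theorem of calculus from an explicit primitive. Hence c(t) is the stated constant, and the
   tilted densities stay in their families: e^(By) times the Exp(beta) density, rescaled by c,
   is the Exp((beta-B)/c) density, and e^(-nu xi) times the Gamma(gamma, eta) density is the
   Gamma(gamma+nu, eta) density. Substituting into the P*-generator yields the dynamic
   contagion generator term by term. *)

From HB Require Import structures.
From mathcomp Require Import all_boot all_order all_algebra.
From mathcomp Require Import all_classical all_reals all_analysis.
From mathcomp Require Import ring lra measurable_realfun.
Import Order.TTheory GRing.Theory Num.Theory.
Import numFieldNormedType.Exports.
Local Open Scope classical_set_scope.
Local Open Scope ring_scope.

Section GammaIntegral.
Variable R : realType.
Implicit Types r x : R.

Lemma is_derive_exprn k x : is_derive x 1 (@GRing.exp R ^~ k) (k%:R * x ^+ k.-1).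
Proof. by apply: DeriveDef; [exact: exprn_derivable | rewrite exp_derive /GRing.scale /= mulr1]. Qed.

(* Primitive of x^k e^(-rx), following the integration-by-parts recursion. *)
Fixpoint gamma_prim r (k : nat) : R -> R :=
  match k with
  | 0 => fun x => - expR (- (r * x)) / r
  | k'.+1 => fun x => - (x ^+ k'.+1 * expR (- (r * x))) / r + k'.+1%:R / r * gamma_prim r k' x
  end.

Lemma is_derive_gamma_prim r k x : r != 0 ->
  is_derive x 1 (gamma_prim r k) (x ^+ k * expR (- (r * x))).
Proof.
move=> r0; elim: k => [|k IH] /=.
  by apply: is_derive_eq; rewrite /GRing.scale /=; field.
have dX := is_derive_exprn k.+1 x.
by apply: is_derive_eq; rewrite /GRing.scale /=; field.
Qed.

Lemma gamma_prim0 r k : r != 0 -> gamma_prim r k 0 = - (k`!%:R / r ^+ k.+1).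
Proof.
move=> r0; elim: k => [|k IH] /=; first by rewrite mulr0 oppr0 expR0 fact0 expr1 mulNr.
rewrite IH expr0n /= mul0r oppr0 mul0r add0r factS natrM [r ^+ k.+2]exprS.
by field; rewrite expf_neq0.
Qed.

Lemma pow_expR_le r k x : 0 < r -> 0 < x ->
  x ^+ k * expR (- (r * x)) <= k.+1`!%:R / r ^+ k.+1 / x.
Proof.
move=> r0 x0; have fact0 : (0 < k.+1`!%:R :> R) by rewrite ltr0n fact_gt0.
have taylor : (r * x) ^+ k.+1 / k.+1`!%:R <= expR (r * x).
  by have := expR_ge1Dxn k (ltW (mulr_gt0 r0 x0)); lra.
have -> : x ^+ k * expR (- (r * x)) =
    (k.+1`!%:R / r ^+ k.+1 / x) * ((r * x) ^+ k.+1 / k.+1`!%:R) / expR (r * x).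
  rewrite expRN exprMn !exprS; field.
  by rewrite !gt_eqF ?expR_gt0 ?exprn_gt0 ?mulr_gt0.
rewrite ler_pdivrMr ?expR_gt0 // ler_wpM2l // !divr_ge0 ?exprn_ge0 ?ltW //.
Qed.

Lemma cvgy_pow_expR r k : 0 < r ->
  x ^+ k * expR (- (r * x)) @[x --> +oo] --> (0 : R).
Proof.
move=> r0; apply: (@squeeze_cvgr _ _ _ _ (fun=> 0) (fun x => k.+1`!%:R / r ^+ k.+1 / x)).
- near=> x; have x0 : 0 < x by near: x; exact: nbhs_pinfty_gt.
  by rewrite pow_expR_le // mulr_ge0 ?exprn_ge0 ?expR_ge0 ?ltW.
- exact: cvg_cst.
- rewrite -(mulr0 (k.+1`!%:R / r ^+ k.+1)); apply: cvgMl_tmp.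
  apply/(@gtr0_cvgV0 _ _ _ _ id); last exact: cvg_id.
  near=> x; near: x; exact: nbhs_pinfty_gt.
Unshelve. all: end_near.
Qed.

Lemma cvgy_gamma_prim r k : 0 < r -> gamma_prim r k x @[x --> +oo] --> (0 : R).
Proof.
move=> r0; elim: k => [|k IH] /=.
  rewrite -(mul0r r^-1) -oppr0; apply: cvgMr_tmp; apply: cvgN.
  by have := @cvgy_pow_expR r 0 r0; under eq_fun do rewrite expr0 mul1r.
rewrite -[0]addr0; apply: cvgD.
  by rewrite -(mul0r r^-1) -oppr0; apply: cvgMr_tmp; apply: cvgN; exact: cvgy_pow_expR.
by rewrite -(mulr0 (k.+1%:R / r)); apply: cvgMl_tmp.
Qed.

Lemma Lint_pow_expR (C r : R) k : 0 <= C -> 0 < r ->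
  Lint (fun x => C * (x ^+ k * expR (- (r * x)))) = C * (k`!%:R / r ^+ k.+1).
Proof.
move=> C0 r0; have rn0 : r != 0 by rewrite gt_eqF.
have dF x : is_derive x 1 (fun y => C * gamma_prim r k y) (C * (x ^+ k * expR (- (r * x)))).
  by have dG := is_derive_gamma_prim r k x rn0; apply: is_derive_eq.
have cf : continuous (fun x : R => C * (x ^+ k * expR (- (r * x)))).
  move=> x; have dX := is_derive_exprn k x.
  by apply: differentiable_continuous; apply/derivable1_diffP; exact: ex_derive.
rewrite /Lint /Rintegral integral_itv_obnd_cbnd; last first.
  by apply/measurable_EFinP; apply: measurable_funTS; exact: continuous_measurable_fun cf.
rewrite (@ge0_continuous_FTC2y _ _ (fun y => C * gamma_prim r k y) 0 0).
- by rewrite -EFinB /= gamma_prim0 // sub0r mulrN opprK.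
- by move=> x x0; rewrite mulr_ge0 // mulr_ge0 ?exprn_ge0 ?expR_ge0.
- exact: continuous_subspaceT cf.
- by rewrite -(mulr0 C); apply: cvgMl_tmp; exact: cvgy_gamma_prim.
- by move=> x _; exact: ex_derive.
- apply: cvg_at_right_filter.
  have : derivable (fun y => C * gamma_prim r k y) 0 1 by exact: ex_derive.
  by move/derivable1_diffP/differentiable_continuous.
- by move=> x _; rewrite derive1E; exact: derive_val.
Qed.

End GammaIntegral.

Section Densities.
Variable R : realType.
Implicit Types r s c : R.

Lemma exprVn_1Ddiv r s k : r != 0 -> (1 + s / r) ^- k = (r / (r + s)) ^+ k.
Proof.
move=> r0; rewrite (_ : 1 + s / r = (r + s) / r); last by field.
by rewrite -exprVn invf_div.
Qed.

Lemma laplace_exp_pdf r s : 0 <= r -> 0 < r + s ->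
  laplace (exp_pdf r) s = r / (r + s).
Proof.
move=> r0 rs0; rewrite /laplace /exp_pdf.
have -> : (fun y => expR (- (s * y)) * (r * expR (- (r * y))))
    = (fun y => r * (y ^+ 0 * expR (- ((r + s) * y)))).
  by apply/funext => y; rewrite expr0 mul1r mulrCA -expRD mulrDl opprD addrC.
by rewrite Lint_pow_expR // fact0 expr1 mul1r.
Qed.

Lemma laplace_gamma_pdf r s k : 0 < r -> 0 < r + s -> (1 <= k)%N ->
  laplace (gamma_pdf r k) s = (1 + s / r) ^- k.
Proof.
move=> r0 rs0; case: k => [//|k] _; rewrite /laplace /gamma_pdf /=.
have fact0 : (0 < k`!%:R :> R) by rewrite ltr0n fact_gt0.
have -> : (fun y => expR (- (s * y)) * (r ^+ k.+1 * y ^+ k * expR (- (r * y)) / k`!%:R))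
    = (fun y => r ^+ k.+1 / k`!%:R * (y ^+ k * expR (- ((r + s) * y)))).
  by apply/funext => y; rewrite mulrDl opprD expRD; field; rewrite gt_eqF.
rewrite Lint_pow_expR ?divr_ge0 ?exprn_ge0 ?ltW //.
by rewrite exprVn_1Ddiv ?gt_eqF // expr_div_n; field; rewrite !expf_neq0 ?gt_eqF.
Qed.

Lemma tilted_exp_pdf r s c u : 0 < r -> s < r -> c != 0 ->
  expR (s * (u / c)) / laplace (exp_pdf r) (- s) * exp_pdf r (u / c) / c
  = exp_pdf ((r - s) / c) u.
Proof.
move=> r0 sr c0; rewrite laplace_exp_pdf ?ltW ?subr_gt0 // /exp_pdf.
rewrite (_ : - ((r - s) / c * u) = s * (u / c) + - (r * (u / c))); last by field.
by rewrite expRD; field; rewrite c0 !gt_eqF ?subr_gt0.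
Qed.

Lemma tilde_j_gamma_pdf r s k xi : 0 < r -> 0 < r + s -> (1 <= k)%N ->
  tilde_j s (gamma_pdf r k) xi = gamma_pdf (r + s) k xi.
Proof.
move=> r0 rs0 k1; rewrite /tilde_j laplace_gamma_pdf // /gamma_pdf.
rewrite mulrDl opprD expRD exprVn_1Ddiv ?gt_eqF // expr_div_n.
have fact0 : (0 < k.-1`!%:R :> R) by rewrite ltr0n fact_gt0.
by field; rewrite ?expf_neq0 ?gt_eqF.
Qed.

End Densities.

Theorem corollary3 (R : realType)
  (T lambda0 a delta rho alpha beta gamma : R) (eta : nat)
  (theta psi nu b : R) (B : R -> R)
  (hT : 0 < T) (hl0 : 0 < lambda0) (ha : 0 <= a) (hdelta : 0 < delta)
  (hrho : 0 < rho) (halpha : 0 < alpha) (hbeta : 0 < beta) (hgamma : 0 < gamma)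
  (heta : (1 <= eta)%N) (htheta : 1 <= theta) (hpsi : 1 <= psi)
  (hnu : - gamma < nu) (hnu0 : nu < 0)
  (hstab : theta * laplace (gamma_pdf gamma eta) nu * mean (exp_pdf beta) < delta)
  (hb : 0 < b) (hB0 : B 0 = b)
  (hBode : forall t, 0 <= t <= T ->
     derivable B t 1 /\
     derive1 B t - delta * B t
       + theta * laplace (gamma_pdf gamma eta) nu * laplace (exp_pdf beta) (- B t)
       + (- (theta * laplace (gamma_pdf gamma eta) nu - 1)) - 1 = 0)
  (hBa : forall t, 0 <= t <= T -> B t < alpha)
  (hBb : forall t, 0 <= t <= T -> B t < beta) :
  forall (f : stfun R) (lam : R) (n : nat) (c : R) (m : nat) (Lam t : R),
    0 <= t <= T ->
    let ct := theta * (1 + nu / gamma) ^- eta * (beta / (beta - B t)) in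
    let lam_h := (alpha - B t) / ct in
    let lam_g := (beta - B t) / ct in
    Pstar_gen theta psi nu rho a delta B (exp_pdf beta) (exp_pdf alpha)
      (gamma_pdf gamma eta) f lam n c m Lam t
    = DCP_gen (ct * a) (psi * (alpha / (alpha - B t)) * rho) delta
        (exp_pdf lam_g) (exp_pdf lam_h) (gamma_pdf (gamma + nu) eta)
        f lam n c m Lam t.
Proof.
move=> f lam n c m Lam t ht ct lam_h lam_g.
have [Ba Bb] := (hBa t ht, hBb t ht).
have gnu_gt0 : 0 < gamma + nu by lra.
have theta_gt0 : 0 < theta := lt_le_trans ltr01 htheta.
have ct_gt0 : 0 < ct.
  by rewrite /ct exprVn_1Ddiv ?gt_eqF // !mulr_gt0 ?exprn_gt0 ?divr_gt0 ?invr_gt0 ?subr_gt0.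
have ctE : cfun theta nu B (exp_pdf beta) (gamma_pdf gamma eta) t = ct.
  by rewrite /cfun laplace_gamma_pdf // laplace_exp_pdf ?ltW ?subr_gt0.
rewrite /Pstar_gen /DCP_gen /= ctE laplace_exp_pdf ?ltW ?subr_gt0 //.
congr (_ + _ + _ + lam * (Lint _ - _) + _ * (Lint _ - _)).
- apply/funext => xi; rewrite tilde_j_gamma_pdf //; congr (Lint _ * _).
  by apply/funext => u; rewrite /tilde_g tilted_exp_pdf ?gt_eqF.
- by apply/funext => v; rewrite /tilde_h tilted_exp_pdf ?gt_eqF.
Qed.
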